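(* Let $\mathbb{F}$ be a field and let $n,k$ be integers with $1<k<n$. Call an integer $l$ realizable if there is a unital $\mathbb{F}$-algebra $\mathcal{A}$ with $\dim\mathcal{A}=n$ and $l(\mathcal{A})=l$. Then: (1) the interval $[2^{n-k-1},2^{n-k}-1]$ contains at least $1+\binom{n-k-1}{1}+\cdots+\binom{n-k-1}{\min(k-1,\,n-k-1)}$ realizable integers; (2) if $k>\lceil n/2\rceil$, then every integer in $[2^{n-k-1},2^{n-k}-1]$ is realizable; (3) if $k=2$, then the interval $[2^{n-k-1},2^{n-k}-1]$ contains exactly $1+\binom{n-3}{1}=n-2$ realizable integers.
   Context: All algebras are finite-dimensional, unital, not necessarily associative algebras over the field $\mathbb{F}$. For a finite generating set $S$ of an algebra $\mathcal{A}$, a word in $S$ is any product (with any bracketing) of finitely many elements of $S$; its length is the number of factors, and $1$ is a word of length $0$. $L_i(S)$ is the linear span of all words in $S$ of length at most $i$. The length of $S$ is $l(S)=\min\{k\ge0: L_k(S)=\mathcal{A}\}$, and $l(\mathcal{A})=\max\{l(S): S\text{ a finite generating set of }\mathcal{A}\}$. *)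

From HB Require Import structures.
From mathcomp Require Import all_boot all_order all_algebra.
Set Implicit Arguments. Unset Strict Implicit. Unset Printing Implicit Defensive.
Import Order.TTheory GRing.Theory Num.Theory.
Local Open Scope ring_scope.

(* An n-dimensional (not necessarily associative) F-algebra is modelled, up to
   isomorphism, as the vector space F^n = 'rV[F]_n together with a bilinear
   multiplication [mul] and a two-sided unit [e]. *)

Section AlgDefs.
Variables (F : fieldType) (n : nat).
Local Notation V := 'rV[F]_n.

Definition bilinear_mul (mul : V -> V -> V) : Prop :=
  (forall (a : F) (x y z : V), mul (a *: x + y) z = a *: mul x z + mul y z) /\
  (forall (a : F) (x y z : V), mul z (a *: x + y) = a *: mul z x + mul z y).

Definition is_unit_elt (mul : V -> V -> V) (e : V) : Prop :=
  forall x : V, mul e x = x /\ mul x e = x.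

Inductive is_word (mul : V -> V -> V) (S : seq V) : nat -> V -> Prop :=
  | word_gen s : s \in S -> is_word mul S 1 s
  | word_mul a b x y : is_word mul S a x -> is_word mul S b y ->
      is_word mul S (a + b) (mul x y).

Definition L_full (mul : V -> V -> V) (e : V) (S : seq V) (k : nat) : Prop :=
  exists ws : seq V,
    (forall w, w \in ws -> w = e \/ exists m, (1 <= m <= k)%N /\ is_word mul S m w)
    /\ <<ws>>%VS = fullv.

Definition set_length (mul : V -> V -> V) (e : V) (S : seq V) (l : nat) : Prop :=
  L_full mul e S l /\ forall k, L_full mul e S k -> (l <= k)%N.

Definition alg_length (mul : V -> V -> V) (e : V) (l : nat) : Prop :=
  (exists S, set_length mul e S l) /\
  forall S l', set_length mul e S l' -> (l' <= l)%N.

End AlgDefs.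

Definition realizable (F : fieldType) (n l : nat) : Prop :=
  exists (mul : 'rV[F]_n -> 'rV[F]_n -> 'rV[F]_n) (e : 'rV[F]_n),
    bilinear_mul mul /\ is_unit_elt mul e /\ alg_length mul e l.

(* For a generating set S, call m a jump when L_(m-1)(S) <> L_m(S). A word of length m
   outside L_(m-1) is a product of two words whose lengths must both be jumps, so every
   jump m > 1 is the sum of two smaller jumps, while dim L_m grows strictly along jumps.
   Arithmetic on such sets gives m <= 2^(dim L_m - 2) and, when 2m >= 2^(dim L_m - 2),
   that 2m - 2^(dim L_m - 2) is 0 or a power of 2; for m = l(S), where dim L_m = n, this
   leaves only n - 2 possible lengths in [2^(n-3), 2^(n-2)).
   Conversely, take the algebra with basis e_0 = 1, e_1, ..., e_(n-1) in which e_1 is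
   squared r times and the result is then multiplied successively by e_(j+1) for the j
   in a list js of exponents below r, all other products of basis vectors being 0. It is
   graded by weights, so the generators have length exactly the top weight
   2^r + sum_j 2^j, and a leading-term argument shows that no generating set needs
   longer words. Counting the admissible lists js gives the binomial sums. *)

From HB Require Import structures.
From mathcomp Require Import all_boot all_order all_algebra.
From mathcomp Require Import zify.
Set Implicit Arguments. Unset Strict Implicit. Unset Printing Implicit Defensive.
Import GRing.Theory.

(** * Jump sets *)

Lemma exp2_gt0 p : 0 < 2 ^ p.
Proof. by rewrite expn_gt0. Qed.

Lemma double_exp2_le a b : a < b -> 2 * 2 ^ a <= 2 ^ b.
Proof. by move=> ab; rewrite -expnS leq_exp2l. Qed.

Lemma exp2_subn1 p : 0 < p -> 2 ^ p = 2 * 2 ^ (p - 1).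
Proof. by case: p => // p _; rewrite expnS subn1. Qed.

(* [jump] abstracts the lengths m with L_(m-1) <> L_m; [ix m] stands for dim L_m - 2. *)
Section JumpSets.
Variables (jump : pred nat) (ix : nat -> nat).
Hypothesis jump_gt0 : forall m, jump m -> 0 < m.
Hypothesis jump_split : forall m, jump m -> 1 < m ->
  exists a b, [/\ jump a, jump b & a + b = m].
Hypothesis ix_increasing : forall a m, jump a -> jump m -> a < m -> ix a < ix m.

Lemma jump_split_le m : jump m -> 1 < m ->
  exists a b, [/\ jump a, jump b, a + b = m & b <= a].
Proof.
move=> jm m1; have [a [b [ja jb abm]]] := jump_split jm m1.
have [ba|ab] := leqP b a; first by exists a, b.
by exists b, a; split; rewrite 1?addnC 1?ltnW.
Qed.

Lemma jump_le_exp m : jump m -> m <= 2 ^ ix m.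
Proof.
elim/ltn_ind: m => m IH jm; have [m1|m1] := leqP m 1.
  by have := jump_gt0 jm; have := exp2_gt0 (ix m); lia.
have [a [b [ja jb abm]]] := jump_split jm m1.
have a0 := jump_gt0 ja; have b0 := jump_gt0 jb.
have := IH a ltac:(lia) ja; have := IH b ltac:(lia) jb.
have := double_exp2_le (ix_increasing ja jm ltac:(lia)).
have := double_exp2_le (ix_increasing jb jm ltac:(lia)).
lia.
Qed.

Lemma jump_pow2_below x : jump x -> x = 2 ^ ix x ->
  forall y, jump y -> y <= x -> y = 2 ^ ix y.
Proof.
elim/ltn_ind: x => x IH jx xE y jy yx.
have [->|yx'] := eqVneq y x; first by [].
have [x1|x1] := leqP x 1; first by have := jump_gt0 jy; lia.
have [a [b [ja jb abx ba]]] := jump_split_le jx x1.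
have b0 := jump_gt0 jb.
have ia := ix_increasing ja jx ltac:(lia).
have xP := exp2_subn1 (leq_ltn_trans (leq0n _) ia).
have [ha hb] := (jump_le_exp ja, jump_le_exp jb).
have ha' := double_exp2_le ia.
have hb' := double_exp2_le (ix_increasing jb jx ltac:(lia)).
have aE : a = 2 ^ ix a by lia.
have [ya|ay] := leqP y a; first exact: IH a ltac:(lia) ja aE y jy ya.
have := double_exp2_le (ix_increasing jy jx ltac:(lia)).
have := jump_le_exp jy; lia.
Qed.

(* Split m = a + b with b <= a: either ix a < ix m - 1 and then 2m <= 2^(ix m), or the
   defect 2m - 2^(ix m) is assembled from the defects of a and b. *)
Lemma jump_near_exp m : jump m -> 2 ^ ix m <= 2 * m ->
  2 * m = 2 ^ ix m \/ exists t, 2 * m = 2 ^ ix m + 2 ^ t.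
Proof.
elim/ltn_ind: m => m IH jm hm.
have [m1|m1] := leqP m 1.
  have mE : m = 1 by have := jump_gt0 jm; lia.
  have [I0|I0] := posnP (ix m); first by right; exists 0; rewrite I0 mE.
  by have := exp2_subn1 I0; have := exp2_gt0 (ix m - 1); lia.
have [a [b [ja jb abm ba]]] := jump_split_le jm m1.
have b0 := jump_gt0 jb.
have [ha hb] := (jump_le_exp ja, jump_le_exp jb).
have [low|high] := ltnP (ix a).+1 (ix m).
  by left; have := double_exp2_le low; rewrite expnS; lia.
have Ia : 2 ^ ix m = 2 * 2 ^ ix a.
  by rewrite -expnS; congr (expn 2 _); have := ix_increasing ja jm ltac:(lia); lia.
have [haE|[t ht]] := IH a ltac:(lia) ja ltac:(lia); first by left; lia.
have tle : t <= ix a by rewrite -(leq_exp2l _ _ (isT : 1 < 2)); lia.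
case: ltngtP tle => // [tlt|tE] _; last first.
  rewrite tE in ht; have bE := jump_pow2_below ja ltac:(lia) jb ba.
  by right; exists (ix b).+1; rewrite expnS; lia.
have [bE|blt] := eqVneq b a; first by right; exists t.+1; rewrite expnS; lia.
have ib := ix_increasing jb ja ltac:(lia).
have ht2 := double_exp2_le tlt.
have [bsmall|btop] := ltnP (ix b).+1 (ix a).
  by left; have := double_exp2_le bsmall; rewrite expnS; lia.
have Ib : 2 ^ ix a = 2 * 2 ^ ix b by rewrite -expnS; congr (expn 2 _); lia.
have [hbE|[u hu]] := IH b ltac:(lia) jb ltac:(lia); first by left; lia.
have ule : u <= ix b by rewrite -(leq_exp2l _ _ (isT : 1 < 2)); lia.
case: ltngtP ule => // [ult|uE] _; last by right; exists t; rewrite uE in hu; lia.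
have [tlt'|tgt|tE] := ltngtP t (ix b); last by right; exists u; rewrite tE in ht; lia.
- by left; have := double_exp2_le ult; have := double_exp2_le tlt'; lia.
- by lia.
Qed.
End JumpSets.

(** * The word filtration *)

Section Spans.
Local Open Scope ring_scope.
Variables (F : fieldType) (vT : vectType F).

Lemma span_ind (P : vT -> Prop) (X : seq vT) :
  P 0 -> (forall a u v, P u -> P v -> P (a *: u + v)) ->
  {in X, forall x, P x} -> forall v, v \in <<X>>%VS -> P v.
Proof.
move=> P0 PD; elim: X => [|x X IH] PX v.
  by rewrite span_nil memv0 => /eqP ->.
rewrite span_cons => /memv_addP [u /vlineP [a ->] [w hw ->]].
apply: PD; first by apply: PX; rewrite mem_head.
by apply: IH hw => y hy; apply: PX; rewrite in_cons hy orbT.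
Qed.

Lemma vspace_basis_full n (U : {vspace 'rV[F]_n}) :
  (forall i : 'I_n, 'e_i \in U) -> U = fullv.
Proof.
move=> hU; apply/eqP; rewrite eqEsubv subvf /=; apply/subvP => v _.
by rewrite [v]row_sum_delta; apply: memv_suml => i _; apply/memvZ/hU.
Qed.

End Spans.

Section BilinearMul.
Local Open Scope ring_scope.
Variables (F : fieldType) (n : nat).
Local Notation V := 'rV[F]_n.
Variable mul : V -> V -> V.
Hypothesis mul_bilinear : bilinear_mul mul.

Lemma bmulDl x y z : mul (x + y) z = mul x z + mul y z.
Proof. by have := mul_bilinear.1 1 x y z; rewrite !scale1r. Qed.

Lemma bmulDr x y z : mul z (x + y) = mul z x + mul z y.
Proof. by have := mul_bilinear.2 1 x y z; rewrite !scale1r. Qed.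

Lemma bmul0l z : mul 0 z = 0.
Proof. by apply: (addrI (mul 0 z)); rewrite -bmulDl !addr0. Qed.

Lemma bmul0r z : mul z 0 = 0.
Proof. by apply: (addrI (mul z 0)); rewrite -bmulDr !addr0. Qed.

Lemma bmulZl a x z : mul (a *: x) z = a *: mul x z.
Proof. by have := mul_bilinear.1 a x 0 z; rewrite !addr0 bmul0l addr0. Qed.

Lemma bmulZr a x z : mul z (a *: x) = a *: mul z x.
Proof. by have := mul_bilinear.2 a x 0 z; rewrite !addr0 bmul0r addr0. Qed.

Lemma bmulBl x y z : mul (x - y) z = mul x z - mul y z.
Proof. by rewrite bmulDl -scaleN1r bmulZl scaleN1r. Qed.

Lemma bmulBr x y z : mul z (x - y) = mul z x - mul z y.
Proof. by rewrite bmulDr -scaleN1r bmulZr scaleN1r. Qed.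

End BilinearMul.

Section WordFiltration.
Local Open Scope ring_scope.
Variables (F : fieldType) (n : nat).
Local Notation V := 'rV[F]_n.
Variables (mul : V -> V -> V) (e : V) (S : seq V).
Hypotheses (mul_bilinear : bilinear_mul mul) (e_unit : is_unit_elt mul e).

Lemma is_word_gt0 j w : is_word mul S j w -> (0 < j)%N.
Proof. by elim=> // a b x y _ ha _ hb; rewrite addn_gt0 ha. Qed.

Fixpoint words_rec (f j : nat) : seq V :=
  if f is f'.+1 then
    if j == 1%N then S else
    flatten [seq [seq mul x y | x <- words_rec f' a, y <- words_rec f' (j - a)]
            | a <- iota 1 j.-1]
  else [::].

Definition words j := words_rec j j.

Lemma words_recP f j w : (j <= f)%N ->
  reflect (is_word mul S j w) (w \in words_rec f j).
Proof.
elim: f j w => [|f IH] j w jf.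
  by apply: (iffP idP) => // /is_word_gt0; lia.
apply: (iffP idP) => /=.
  case: eqP => [-> /word_gen //|j1 /flatten_mapP [a]].
  rewrite mem_iota => ha /allpairsP [[x y] /= [/IH hx /IH hy ->]].
  have -> : j = (a + (j - a))%N by lia.
  by apply: word_mul; [apply: hx | apply: hy]; lia.
move=> hw; case: hw jf => [s hs _|a b x y hx hy jf]; first by rewrite eqxx.
have [a0 b0] := (is_word_gt0 hx, is_word_gt0 hy).
rewrite gtn_eqF; last lia.
apply/flatten_mapP; exists a; first by rewrite mem_iota; lia.
have -> : (a + b - a = b)%N by lia.
by apply: allpairs_f; apply/IH => //; lia.
Qed.

Lemma wordsP j w : reflect (is_word mul S j w) (w \in words j).
Proof. exact: words_recP. Qed.

Definition Lspan_gens m := e :: flatten [seq words j | j <- iota 1 m].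
Definition Lspan m := <<Lspan_gens m>>%VS.

Lemma Lspan_gensP m g : g \in Lspan_gens m <->
  g = e \/ exists j, (1 <= j <= m)%N /\ is_word mul S j g.
Proof.
rewrite in_cons; split.
  case/orP => [/eqP ->|/flatten_mapP [j]]; first by left.
  by rewrite mem_iota => hj /wordsP hw; right; exists j; split => //; lia.
case=> [->|[j [hj /wordsP hw]]]; first by rewrite eqxx.
by apply/orP; right; apply/flatten_mapP; exists j; rewrite // mem_iota; lia.
Qed.

Lemma L_fullE m : L_full mul e S m <-> Lspan m = fullv.
Proof.
split=> [[ws [hws hsp]]|full]; last first.
  by exists (Lspan_gens m); split => // w /Lspan_gensP.
apply/eqP; rewrite eqEsubv subvf -hsp /=.
by apply/span_subvP => w /hws hw; apply/memv_span/Lspan_gensP.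
Qed.

Lemma unit_in_Lspan m : e \in Lspan m.
Proof. by rewrite memv_span ?mem_head. Qed.

Lemma word_in_Lspan m j w : is_word mul S j w -> (j <= m)%N -> w \in Lspan m.
Proof.
move=> hw jm; apply/memv_span/Lspan_gensP; right; exists j.
by rewrite jm (is_word_gt0 hw).
Qed.

Lemma Lspan_mono a b : (a <= b)%N -> (Lspan a <= Lspan b)%VS.
Proof.
move=> ab; apply/span_subvP => g /Lspan_gensP [->|[j [hj hw]]].
  exact: unit_in_Lspan.
by apply: word_in_Lspan hw _; lia.
Qed.

Lemma Lspan_mul a b u v : u \in Lspan a -> v \in Lspan b -> mul u v \in Lspan (a + b).
Proof.
move=> hu hv; elim/span_ind: u / hu => [|c x y hx hy|g hg].
- by rewrite bmul0l ?mem0v.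
- by rewrite mul_bilinear.1 memvD ?memvZ.
elim/span_ind: v / hv => [|c x y hx hy|h hh].
- by rewrite bmul0r ?mem0v.
- by rewrite mul_bilinear.2 memvD ?memvZ.
case/Lspan_gensP: hg => [->|[j [hj hwg]]].
  rewrite (e_unit h).1; case/Lspan_gensP: hh => [->|[j' [hj' hwh]]].
    exact: unit_in_Lspan.
  by apply: word_in_Lspan hwh _; lia.
case/Lspan_gensP: hh => [->|[j' [hj' hwh]]].
  by rewrite (e_unit g).2; apply: word_in_Lspan hwg _; lia.
by apply: word_in_Lspan (word_mul hwg hwh) _; lia.
Qed.

Definition is_jump m := (0 < m)%N && (Lspan m.-1 != Lspan m).

Lemma is_jump_split m : is_jump m -> (1 < m)%N ->
  exists a b, [/\ is_jump a, is_jump b & (a + b)%N = m].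
Proof.
case/andP => m0 hne m1.
have /allPn [g hg gnot] : ~~ all (fun g => g \in Lspan m.-1) (Lspan_gens m).
  apply: contra hne => /allP/span_subvP sub.
  by rewrite eqEsubv Lspan_mono ?leq_pred.
case/Lspan_gensP: hg gnot => [->|[j [hj hw]]]; first by rewrite unit_in_Lspan.
have [jm|jm] := ltnP j m.
  by move=> /negP[]; apply: word_in_Lspan hw _; lia.
case: hw hj jm => [s _ _|a b x y hx hy]; first lia.
move=> hab hba /negP gnot.
have [a0 b0] := (is_word_gt0 hx, is_word_gt0 hy).
exists a, b; split; last by lia.
  apply/andP; split => //; apply: contra_not_neq gnot => E.
  have hx' : x \in Lspan a.-1 by rewrite E (word_in_Lspan hx).
  by apply: (subvP (Lspan_mono _)) (Lspan_mul hx' (word_in_Lspan hy (leqnn b))); lia.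
apply/andP; split => //; apply: contra_not_neq gnot => E.
have hy' : y \in Lspan b.-1 by rewrite E (word_in_Lspan hy).
by apply: (subvP (Lspan_mono _)) (Lspan_mul (word_in_Lspan hx (leqnn a)) hy'); lia.
Qed.

Lemma unit_neq0 : (0 < n)%N -> e != 0.
Proof.
move=> n0; apply: contra_neq (@oner_neq0 F) => e0.
have /rowP/(_ (Ordinal n0)) := (e_unit (const_mx 1)).1.
by rewrite e0 bmul0l // !mxE.
Qed.

End WordFiltration.

Section LengthUpperBound.
Variables (F : fieldType) (n : nat).
Local Notation V := 'rV[F]_n.
Variables (mul : V -> V -> V) (e : V) (S : seq V).
Hypotheses (mul_bilinear : bilinear_mul mul) (e_unit : is_unit_elt mul e).
Hypothesis n_gt0 : 0 < n.

Local Notation Lspan := (Lspan mul e S).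
Local Notation is_jump := (is_jump mul e S).

Lemma dim_Lspan_gt0 m : 0 < \dim (Lspan m).
Proof.
rewrite lt0n dimv_eq0; apply: contra_neq (unit_neq0 mul_bilinear e_unit n_gt0).
by move=> L0; apply/eqP; rewrite -memv0 -L0 unit_in_Lspan.
Qed.

Lemma is_jump_dim_lt m : is_jump m -> \dim (Lspan m.-1) < \dim (Lspan m).
Proof.
case/andP => _ hne; rewrite ltn_neqAle dimvS ?Lspan_mono ?leq_pred // andbT.
by apply: contra hne => /eqP dimE; rewrite eqEdim Lspan_mono ?leq_pred //= dimE.
Qed.

Lemma is_jump_dim_increasing a m : is_jump a -> is_jump m -> a < m ->
  (\dim (Lspan a)).-2 < (\dim (Lspan m)).-2.
Proof.
move=> ja jm am.
have /(Lspan_mono mul e S)/dimvS : a <= m.-1 by lia.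
have := is_jump_dim_lt ja; have := is_jump_dim_lt jm; have := dim_Lspan_gt0 a.-1.
lia.
Qed.

Lemma set_length_near_exp l : set_length mul e S l -> 2 ^ (n - 2) <= 2 * l ->
  2 * l = 2 ^ (n - 2) \/ exists t, 2 * l = 2 ^ (n - 2) + 2 ^ t.
Proof.
move=> [full minimal] hl.
have l0 : 0 < l by have := exp2_gt0 (n - 2); lia.
have jl : is_jump l.
  rewrite /is_jump l0; apply/negP => /eqP E.
  have /minimal : L_full mul e S l.-1 by apply/L_fullE; rewrite E; apply/L_fullE.
  lia.
have dim_l : \dim (Lspan l) = n by rewrite (L_fullE _ _ _ _).1 // dimvf /dim /= mul1n.
have jump_gt0 m : is_jump m -> 0 < m by case/andP.
have := jump_near_exp jump_gt0 (is_jump_split mul_bilinear e_unit)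
  is_jump_dim_increasing jl.
by rewrite dim_l -subn2; apply.
Qed.
End LengthUpperBound.

(** * Monomial algebras graded by weights *)

Section MonomialAlgebra.
Variables (F : fieldType) (n' : nat).
Local Notation n := n'.+1.
Local Notation V := 'rV[F]_n.
Variables (wt : nat -> nat) (is_prod : pred nat) (lfac rfac : nat -> nat).
Hypothesis wt0 : wt 0 = 0.
Hypothesis wt_gt0 : forall t, 0 < t < n -> 0 < wt t.
Hypothesis wt_gen : forall t, 0 < t < n -> ~~ is_prod t -> wt t = 1.
Hypothesis wt_prod : forall t, 0 < t < n -> is_prod t ->
  [/\ 0 < lfac t < n, 0 < rfac t < n & wt t = wt (lfac t) + wt (rfac t)].
Hypothesis factors_inj : forall t t', 0 < t < n -> 0 < t' < n ->
  is_prod t -> is_prod t' -> lfac t = lfac t' -> rfac t = rfac t' -> t = t'.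
Variable top : 'I_n.
Hypothesis wt_le_top : forall i : 'I_n, wt i <= wt top.

(* The basis vector [e_0] is the unit, [e_t] is the product [e_(lfac t) e_(rfac t)]
   when [is_prod t], and all other products of basis vectors vanish. *)
Definition mtab (i j : 'I_n) : option 'I_n :=
  if i == ord0 then Some j else if j == ord0 then Some i else
  [pick t : 'I_n | [&& 0 < t, is_prod t, lfac t == i & rfac t == j]].

Definition basis_or0 (o : option 'I_n) : V := if o is Some t then ('e_t)%R else 0%R.

Definition mmul (x y : V) : V :=
  (\sum_(i < n) \sum_(j < n) (x ord0 i * y ord0 j) *: basis_or0 (mtab i j))%R.

Definition munit : V := ('e_ord0)%R.

Lemma wt_ord_gt0 (i : 'I_n) : 0 < i -> 0 < wt i.
Proof. by move=> i0; apply: wt_gt0; rewrite i0 ltn_ord. Qed.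

Lemma mtab_wt i j t : mtab i j = Some t -> wt t = wt i + wt j.
Proof.
rewrite /mtab; case: eqP => [-> [<-]|_]; first by rewrite wt0.
case: eqP => [-> [<-]|_]; first by rewrite wt0 addn0.
case: pickP => // s /and4P [s0 ps /eqP <- /eqP <-] [<-].
by case: (wt_prod _ ps); rewrite ?s0 ?ltn_ord.
Qed.

Lemma mmul_coord x y k : (mmul x y) ord0 k =
  (\sum_(i < n) \sum_(j < n) x ord0 i * y ord0 j * (basis_or0 (mtab i j)) ord0 k)%R.
Proof.
rewrite /mmul summxE; apply: eq_bigr => i _; rewrite summxE.
by apply: eq_bigr => j _; rewrite mxE.
Qed.

Lemma basis_or0_coord o k : (basis_or0 o) ord0 k != 0%R -> o = Some k.
Proof.
case: o => [t|] /=; rewrite mxE ?eqxx //=.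
by case: (eqVneq k t) => [->|] //; rewrite eqxx.
Qed.

Lemma mmul_bilinear : bilinear_mul mmul.
Proof.
split=> a x y z; rewrite /mmul scaler_sumr -big_split; apply: eq_bigr => i _ /=;
  rewrite scaler_sumr -big_split; apply: eq_bigr => j _ /=; rewrite !mxE.
  by rewrite mulrDl scalerDl scalerA mulrA.
by rewrite mulrDr scalerDl scalerA mulrCA.
Qed.

Lemma mmul_unit : is_unit_elt mmul munit.
Proof.
move=> x; split.
  rewrite /mmul /munit (bigD1 ord0) //= [X in (_ + X)%R]big1 ?addr0 => [|i i0].
    rewrite [RHS]row_sum_delta; apply: eq_bigr => j _.
    by rewrite mxE !eqxx mul1r.
  by apply: big1 => j _; rewrite mxE eqxx /= (negbTE i0) mul0r scale0r.
rewrite [RHS]row_sum_delta /mmul /munit; apply: eq_bigr => i _.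
rewrite (bigD1 ord0) //= [X in (_ + X)%R]big1 ?addr0 => [|j j0]; last first.
  by rewrite mxE eqxx /= (negbTE j0) mulr0 scale0r.
by rewrite mxE !eqxx mulr1 /mtab eqxx; case: eqP => [->|].
Qed.

Lemma mmul_basis p q : mmul ('e_p)%R ('e_q)%R = basis_or0 (mtab p q).
Proof.
rewrite /mmul (bigD1 p) //= [X in (_ + X)%R]big1 ?addr0 => [|i ip]; last first.
  by apply: big1 => j _; rewrite mxE eqxx /= (negbTE ip) mul0r scale0r.
rewrite (bigD1 q) //= [X in (_ + X)%R]big1 ?addr0 => [|j jq]; last first.
  by rewrite [('e_q)%R _ _]mxE eqxx /= (negbTE jq) mulr0 scale0r.
by rewrite !mxE !eqxx mulr1 scale1r.
Qed.

Lemma mmul_basis_prod (c : 'I_n) : 0 < c -> is_prod c ->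
  exists p q : 'I_n, [/\ 0 < p, 0 < q, wt c = wt p + wt q &
                        mmul ('e_p)%R ('e_q)%R = ('e_c)%R].
Proof.
move=> c0 pc; have cn : 0 < c < n by rewrite c0 ltn_ord.
have [/andP [l0 ln] /andP [r0 rn] wtc] := wt_prod cn pc.
exists (Ordinal ln), (Ordinal rn); split => //; rewrite mmul_basis.
rewrite /mtab -!(inj_eq val_inj) /= (gtn_eqF l0) (gtn_eqF r0).
case: pickP => [t /and4P [t0 pt /eqP lt /eqP rt]|/(_ c)]; last by rewrite c0 pc !eqxx.
congr (basis_or0 (Some _)); apply: val_inj.
by apply: factors_inj => //; rewrite t0 ltn_ord.
Qed.

Definition wt_ge w (v : V) := forall i : 'I_n, wt i < w -> v ord0 i = 0%R.

Definition homog w (v : V) := forall i : 'I_n, wt i != w -> v ord0 i = 0%R.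

Definition wfilt w : {vspace V} :=
  <<[seq ('e_i)%R | i : 'I_n <- enum 'I_n & (w <= wt i)%N]>>%VS.

Lemma basis_in_wfilt w (i : 'I_n) : w <= wt i -> ('e_i)%R \in wfilt w.
Proof. by move=> wi; apply/memv_span/map_f; rewrite mem_filter wi mem_enum. Qed.

Lemma wfilt_subv w (U : {vspace V}) :
  (forall i : 'I_n, w <= wt i -> ('e_i)%R \in U) -> (wfilt w <= U)%VS.
Proof.
by move=> hU; apply/span_subvP => v /mapP [i]; rewrite mem_filter => /andP [/hU ? _] ->.
Qed.

Lemma wfilt_mono a b : a <= b -> (wfilt b <= wfilt a)%VS.
Proof.
by move=> ab; apply: wfilt_subv => i bi; apply/basis_in_wfilt/(leq_trans ab).
Qed.

Lemma wfiltP w v : reflect (wt_ge w v) (v \in wfilt w).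
Proof.
apply: (iffP idP) => [|hv].
  elim/span_ind => [i _|a u u' hu hu' i hi|g /mapP [j]]; rewrite ?mxE //.
    by rewrite hu // hu' // mulr0 addr0.
  rewrite mem_filter => /andP [hj _] -> i hi; rewrite mxE eqxx /=.
  by case: eqP => // ij; move: hi; rewrite ij ltnNge hj.
rewrite [v]row_sum_delta; apply: memv_suml => i _.
have [hi|hi] := ltnP (wt i) w; first by rewrite hv // scale0r mem0v.
by rewrite memvZ // basis_in_wfilt.
Qed.

Lemma wfilt_mul a b x y : x \in wfilt a -> y \in wfilt b -> mmul x y \in wfilt (a + b).
Proof.
move=> /wfiltP hx /wfiltP hy; apply/wfiltP => k hk; rewrite mmul_coord.
apply: big1 => i _; apply: big1 => j _.
have [->|/basis_or0_coord/mtab_wt wk] := eqVneq ((basis_or0 (mtab i j)) ord0 k) 0%R.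
  by rewrite mulr0.
have [ia|ia] := ltnP (wt i) a; first by rewrite hx // !mul0r.
by rewrite hy ?mulr0 ?mul0r //; lia.
Qed.

Lemma homog_mul a b x y : homog a x -> homog b y -> homog (a + b) (mmul x y).
Proof.
move=> hx hy k hk; rewrite mmul_coord; apply: big1 => i _; apply: big1 => j _.
have [->|/basis_or0_coord/mtab_wt wk] := eqVneq ((basis_or0 (mtab i j)) ord0 k) 0%R.
  by rewrite mulr0.
have [ia|ia] := eqVneq (wt i) a; last by rewrite hx // !mul0r.
by rewrite hy ?mulr0 ?mul0r //; apply: contraNneq hk => jb; rewrite wk ia jb.
Qed.

Local Notation Lspan := (Lspan mmul munit).

Definition std_gens : seq V :=
  [seq ('e_i)%R | i : 'I_n <- enum 'I_n & (0 < i) && ~~ is_prod i].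

Lemma basis_in_Lspan_std (c : 'I_n) : 0 < c -> ('e_c)%R \in Lspan std_gens (wt c).
Proof.
have [w wc] : exists w, wt c = w by exists (wt c).
elim/ltn_ind: w c wc => w IH c wc c0; case: (boolP (is_prod c)) => pc.
  have [p [q [p0 q0 wtc <-]]] := mmul_basis_prod c0 pc.
  have [wp wq] := (wt_ord_gt0 p0, wt_ord_gt0 q0).
  have := Lspan_mul mmul_bilinear mmul_unit (IH _ _ p erefl p0) (IH _ _ q erefl q0).
  by rewrite -wtc; apply; lia.
apply: word_in_Lspan; first by apply/word_gen/map_f; rewrite mem_filter c0 pc mem_enum.
exact: wt_ord_gt0.
Qed.

Lemma word_std_homog j w : is_word mmul std_gens j w -> homog j w.
Proof.
elim=> [s|a b x y _ hx _ hy]; last exact: homog_mul.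
case/mapP => i; rewrite mem_filter => /andP [/andP [i0 pi] _] -> t ht.
by rewrite mxE eqxx /=; case: eqP => // ti; move: ht; rewrite ti wt_gen ?i0 ?ltn_ord.
Qed.

Lemma Lspan_std_wt_le k v : v \in Lspan std_gens k ->
  forall i : 'I_n, k < wt i -> v ord0 i = 0%R.
Proof.
move=> hv; elim/span_ind: v / hv => [i _|a u u' hu hu' i hi|g].
- by rewrite mxE.
- by rewrite !mxE hu // hu' // mulr0 addr0.
case/Lspan_gensP => [->|[j [hj /word_std_homog hg]]] i hi.
- by rewrite mxE eqxx /=; case: eqP => // i0; move: hi; rewrite i0 wt0.
- by apply: hg; apply: contraTneq hi => ->; rewrite -leqNgt; case/andP: hj.
Qed.

Lemma std_gens_length : set_length mmul munit std_gens (wt top).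
Proof.
split.
  apply/L_fullE/vspace_basis_full => i; have [i0|i0] := posnP i; last first.
    exact: subvP (Lspan_mono _ _ _ (wt_le_top i)) _ (basis_in_Lspan_std i0).
  have -> : i = ord0 by apply: val_inj.
  exact: unit_in_Lspan.
move=> k /L_fullE full; rewrite leqNgt; apply/negP => kt.
have := Lspan_std_wt_le (_ : ('e_top)%R \in Lspan std_gens k) kt.
by rewrite full memvf mxE !eqxx /= => /(_ isT) /eqP; rewrite oner_eq0.
Qed.

Section ArbitraryGenerators.
Variable S : seq V.
Hypothesis S_generates : exists m, L_full mmul munit S m.

Local Notation mmulDl := (bmulDl mmul_bilinear).
Local Notation mmulDr := (bmulDr mmul_bilinear).
Local Notation mmulZl := (bmulZl mmul_bilinear).
Local Notation mmulZr := (bmulZr mmul_bilinear).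
Local Notation mmulBl := (bmulBl mmul_bilinear).
Local Notation mmulBr := (bmulBr mmul_bilinear).

(* The parts of the generators lying in the augmentation ideal [wfilt 1]. *)
Let S_aug : seq V := [seq (s - s ord0 ord0 *: munit)%R | s : V <- S].

Lemma S_aug_wfilt1 : (<<S_aug>> <= wfilt 1)%VS.
Proof.
apply/span_subvP => _ /mapP [s _ ->]; apply/wfiltP => i.
rewrite ltnS leqn0 => /eqP wi; have -> : i = ord0.
  by apply/val_inj/eqP; rewrite -leqn0 leqNgt; apply/negP => /wt_ord_gt0; rewrite wi.
by rewrite !mxE !eqxx mulr1 subrr.
Qed.

Lemma S_aug_Lspan1 : (<<S_aug>> <= Lspan S 1)%VS.
Proof.
apply/span_subvP => _ /mapP [s hs ->]; apply: memvB; last exact/memvZ/unit_in_Lspan.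
exact: word_in_Lspan (word_gen _ hs) _.
Qed.

(* Modulo [wfilt 2], a product of elements of [T] only sees their constant and linear
   parts, so [T] is closed under [mmul] and contains every word in [S]. *)
Let T : {vspace V} := (<[munit]> + (<<S_aug>> + wfilt 2))%VS.

Lemma T_mul x y : x \in T -> y \in T -> mmul x y \in T.
Proof.
have aug_wfilt1 u : u \in (<<S_aug>> + wfilt 2)%VS -> u \in wfilt 1.
  by apply: subvP; rewrite subv_add S_aug_wfilt1 wfilt_mono.
move=> /memv_addP [_ /vlineP [a ->] [g hg ->]] /memv_addP [_ /vlineP [b ->] [h hh ->]].
rewrite mmulDl !mmulDr !mmulZl !mmulZr (mmul_unit munit).1 (mmul_unit h).1.
have gh : mmul g h \in (<<S_aug>> + wfilt 2)%VS.
  exact: (subvP (addvSr _ _)) (wfilt_mul (aug_wfilt1 _ hg) (aug_wfilt1 _ hh)).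
rewrite (mmul_unit g).2 -!addrA !memvD ?memvZ //;
  by [apply/(subvP (addvSl _ _))/memv_line | apply/(subvP (addvSr _ _))].
Qed.

Lemma Lspan_sub_T m : (Lspan S m <= T)%VS.
Proof.
apply/span_subvP => g /Lspan_gensP [->|[j [_ hw]]].
  exact/(subvP (addvSl _ _))/memv_line.
elim: hw => [s hs|a b x y _ hx _ hy]; last exact: T_mul.
rewrite -[s](subrK (s ord0 ord0 *: munit)%R) addrC memvD //.
  exact/(subvP (addvSl _ _))/memvZ/memv_line.
by apply/(subvP (addvSr _ _))/(subvP (addvSl _ _))/memv_span/map_f.
Qed.

Definition has_lift (c : 'I_n) := exists u, [/\ u \in Lspan S (wt c),
  u \in wfilt (wt c) & (u - ('e_c)%R)%R \in wfilt (wt c).+1].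

Lemma has_lift_gen (c : 'I_n) : 0 < c -> wt c = 1 -> has_lift c.
Proof.
move=> c0 wc1; have [m /L_fullE full] := S_generates.
have : ('e_c)%R \in T by apply: (subvP (Lspan_sub_T m)); rewrite full memvf.
move=> /memv_addP [_ /vlineP [b ->] [_ /memv_addP [u hu [f hf ->]] ec]].
have /wfiltP u0 := subvP S_aug_wfilt1 _ hu; have /wfiltP f0 := hf.
have b0 : b = 0%R.
  move/rowP: ec => /(_ ord0); rewrite !mxE !eqxx u0 ?f0 ?wt0 // !addr0 mulr1.
  by rewrite eq_sym -(inj_eq val_inj) /= (gtn_eqF c0) => <-.
exists u; rewrite wc1; split; first exact: (subvP S_aug_Lspan1).
  exact: (subvP S_aug_wfilt1).
by rewrite ec b0 scale0r add0r opprD addNKr memvN.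
Qed.

Lemma has_lift_all (c : 'I_n) : 0 < c -> has_lift c.
Proof.
have [w wc] : exists w, wt c = w by exists (wt c).
elim/ltn_ind: w c wc => w IH c wc c0; case: (boolP (is_prod c)) => pc; last first.
  by apply: has_lift_gen; rewrite // wt_gen ?c0 ?ltn_ord.
have [p [q [p0 q0 wtc pq]]] := mmul_basis_prod c0 pc.
have [wp wq] := (wt_ord_gt0 p0, wt_ord_gt0 q0).
have [up [upL upF upD]] := IH (wt p) ltac:(lia) p erefl p0.
have [uq [uqL uqF uqD]] := IH (wt q) ltac:(lia) q erefl q0.
exists (mmul up uq); rewrite wtc; split.
- exact: (Lspan_mul mmul_bilinear mmul_unit upL uqL).
- exact: wfilt_mul upF uqF.
have -> : (mmul up uq - ('e_c)%R =
    mmul (up - ('e_p)%R) uq + mmul ('e_p)%R (uq - ('e_q)%R))%R.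
  by rewrite -pq mmulBl mmulBr addrA subrK.
apply: memvD; first by rewrite -addSn; apply: wfilt_mul upD uqF.
by rewrite -addnS; apply: wfilt_mul (basis_in_wfilt (leqnn _)) uqD.
Qed.

Lemma basis_in_Lspan_top (i : 'I_n) : ('e_i)%R \in Lspan S (wt top).
Proof.
have [d dE] : exists d, wt top - wt i = d by exists (wt top - wt i).
elim/ltn_ind: d i dE => d IH i dE; have [i0|i0] := posnP i.
  have -> : i = ord0 by apply: val_inj.
  exact: unit_in_Lspan.
have [u [uL _ uD]] := has_lift_all i0.
rewrite -(subKr u ('e_i)%R) memvB //.
  exact: subvP (Lspan_mono _ _ _ (wt_le_top i)) _ uL.
apply: subvP uD; apply: wfilt_subv => j ij.
by apply: (IH (wt top - wt j)) => //; have := wt_le_top j; lia.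
Qed.

Lemma Lspan_top_full : L_full mmul munit S (wt top).
Proof. exact/L_fullE/vspace_basis_full/basis_in_Lspan_top. Qed.

End ArbitraryGenerators.

Theorem monomial_realizable : realizable F n (wt top).
Proof.
exists mmul, munit; split; first exact: mmul_bilinear.
split; first exact: mmul_unit.
split; first by exists std_gens; exact: std_gens_length.
by move=> S l [full minimal]; apply/minimal/Lspan_top_full; exists l.
Qed.

End MonomialAlgebra.

(** * Realizing 2^r plus a sum of smaller powers of two *)

Section ChainAlgebra.
Variables (r : nat) (js : seq nat).

Definition chain_partial u := \sum_(j <- take u js) 2 ^ j.

(* Basis vectors [1 .. r.+1] are the successive squares of [e_1]; vector [r.+1 + u.+1]
   is [e_(r.+1 + u)] times [e_(j.+1)], where [j] is the [u]-th entry of [js]. *)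
Definition chain_wt t :=
  if t == 0 then 0 else if t <= r then 2 ^ t.-1
  else if t <= r.+1 + size js then 2 ^ r + chain_partial (t - r.+1) else 1.

Definition chain_prod t := 2 <= t <= r.+1 + size js.

Definition chain_rfac t := if t <= r.+1 then t.-1 else (nth 0 js (t - r.+2)).+1.

Lemma chain_partialS u : u < size js ->
  chain_partial u.+1 = chain_partial u + 2 ^ nth 0 js u.
Proof.
by move=> us; rewrite /chain_partial (take_nth 0 us) -cats1 big_cat big_seq1.
Qed.

Lemma chain_partial_le u : chain_partial u <= chain_partial (size js).
Proof.
by rewrite /chain_partial take_size -{2}(cat_take_drop u js) big_cat leq_addr.
Qed.

Lemma chain_wt_sum u : u <= size js -> chain_wt (r.+1 + u) = 2 ^ r + chain_partial u.
Proof.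
by move=> us; rewrite /chain_wt addn_eq0 /= leqNgt ltn_addr //= leq_add2l us addKn.
Qed.

Lemma chain_wt_pow t : 0 < t <= r.+1 -> chain_wt t = 2 ^ t.-1.
Proof.
case/andP => t0; rewrite leq_eqVlt ltnS => /orP [/eqP ->|tr].
  have := chain_wt_sum (leq0n (size js)).
  by rewrite !addn0 /chain_partial take0 big_nil addn0.
by rewrite /chain_wt gtn_eqF // tr.
Qed.

Lemma chain_wt_top : chain_wt (r.+1 + size js) = 2 ^ r + \sum_(j <- js) 2 ^ j.
Proof. by rewrite chain_wt_sum // /chain_partial take_size. Qed.

Variable n' : nat.

Lemma chain_wt_gt0 t : 0 < t < n'.+1 -> 0 < chain_wt t.
Proof.
case/andP => t0 _; rewrite /chain_wt gtn_eqF //.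
by case: ifP; rewrite ?expn_gt0 //; case: ifP; rewrite ?addn_gt0 ?expn_gt0.
Qed.

Lemma chain_wt_gen t : 0 < t < n'.+1 -> ~~ chain_prod t -> chain_wt t = 1.
Proof.
case/andP => t0 _; rewrite /chain_prod negb_and -!ltnNge => /orP [t1|tbig].
  have -> : t = 1 by lia.
  by rewrite chain_wt_pow.
have h1 : ~~ (t <= r) by rewrite -ltnNge; lia.
have h2 : ~~ (t <= r.+1 + size js) by rewrite -ltnNge.
by rewrite /chain_wt gtn_eqF // (negbTE h1) (negbTE h2).
Qed.

Lemma chain_factors_inj t t' : 0 < t < n'.+1 -> 0 < t' < n'.+1 ->
  chain_prod t -> chain_prod t' -> t.-1 = t'.-1 -> chain_rfac t = chain_rfac t' ->
  t = t'.
Proof. by move=> _ _ /andP [t2 _] /andP [t2' _] tt' _; lia. Qed.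

Hypothesis js_lt : all (fun j => j < r) js.

Lemma chain_wt_prod t : 0 < t < n'.+1 -> chain_prod t ->
  [/\ 0 < t.-1 < n'.+1, 0 < chain_rfac t < n'.+1 &
      chain_wt t = chain_wt t.-1 + chain_wt (chain_rfac t)].
Proof.
case/andP => _ tn /andP [t2 ts]; rewrite /chain_rfac.
have [tr|tr] := leqP t r.+1.
  split; [lia | lia | rewrite !chain_wt_pow; [|lia|lia]].
  have -> : t.-1 = (t.-1).-1.+1 by lia.
  by rewrite expnS /=; lia.
have [u tE] : exists u, t = r.+1 + u.+1 by exists (t - r.+2); lia.
have us : u < size js by lia.
have jr : nth 0 js u < r by apply: (allP js_lt); rewrite mem_nth.
rewrite tE; have -> : r.+1 + u.+1 - r.+2 = u by lia.
have -> : (r.+1 + u.+1).-1 = r.+1 + u by lia.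
split; [lia | lia |].
rewrite chain_wt_sum // (chain_wt_sum (ltnW us)) chain_partialS //.
by rewrite chain_wt_pow /=; lia.
Qed.

Hypothesis chain_fits : r.+1 + size js < n'.+1.

Lemma chain_wt_le_top (i : 'I_n'.+1) : chain_wt i <= chain_wt (Ordinal chain_fits).
Proof.
rewrite /= chain_wt_sum // {1}/chain_wt; have := exp2_gt0 r.
case: ifP => _; first lia.
case: ifP => ir.
  by have := leq_pexp2l (isT : 0 < 2) (leq_trans (leq_pred i) ir); lia.
by case: ifP => _; rewrite ?leq_add2l ?chain_partial_le; lia.
Qed.

End ChainAlgebra.

Theorem chain_realizable (F : fieldType) n r js : all (fun j => j < r) js ->
  r.+1 + size js < n -> realizable F n (2 ^ r + \sum_(j <- js) 2 ^ j).
Proof.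
case: n => // n' js_lt fits; rewrite -(chain_wt_top r js).
exact: (monomial_realizable F erefl (@chain_wt_gt0 r js n') (@chain_wt_gen r js n')
  (chain_wt_prod js_lt) (@chain_factors_inj r js n') (chain_wt_le_top js_lt fits)).
Qed.

Fixpoint sparse_sums m c : seq nat :=
  if m is m'.+1 then
    sparse_sums m' c ++
    (if c is c'.+1 then map (addn (2 ^ m')) (sparse_sums m' c') else [::])
  else [:: 0].

Lemma sparse_sums_lt m c x : x \in sparse_sums m c -> x < 2 ^ m.
Proof.
elim: m c x => [|m IH] c x /=; first by rewrite inE => /eqP ->.
rewrite expnS mem_cat => /orP [/IH|]; first lia.
by case: c => // c /mapP [y /IH hy ->]; lia.
Qed.

Lemma sparse_sums_uniq m c : uniq (sparse_sums m c).
Proof.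
elim: m c => [|m IH] c //=; rewrite cat_uniq IH /=; case: c => [|c] //=.
rewrite (map_inj_uniq (@addnI _)) IH andbT.
by apply/hasPn => _ /mapP [y _ ->]; apply/negP => /sparse_sums_lt; lia.
Qed.

Lemma sparse_sums_repr m c x : x \in sparse_sums m c ->
  exists js, [/\ size js <= c, all (fun j => j < m) js & x = \sum_(j <- js) 2 ^ j].
Proof.
elim: m c x => [|m IH] c x /=.
  by rewrite inE => /eqP ->; exists [::]; rewrite big_nil.
rewrite mem_cat => /orP [/IH [js [h1 /allP h2 ->]]|].
  by exists js; split => //; apply/allP => j /h2; lia.
case: c => // c /mapP [y /IH [js [h1 /allP h2 ->]] ->].
exists (m :: js); rewrite /= ltnS h1 ltnSn big_cons; split => //.
by apply/allP => j /h2; lia.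
Qed.

Lemma sparse_sums0 m c : 0 \in sparse_sums m c.
Proof. by elim: m => //= m IH; rewrite mem_cat IH. Qed.

Lemma sparse_sums_exp2 m c t : t < m -> 2 ^ t \in sparse_sums m c.+1.
Proof.
elim: m => // m IH; rewrite ltnS leq_eqVlt => /orP [/eqP ->|tm] /=; rewrite mem_cat.
  by apply/orP; right; apply/mapP; exists 0; rewrite ?addn0 ?sparse_sums0.
by rewrite IH.
Qed.

Lemma size_sparse_sums m c : size (sparse_sums m c) = \sum_(0 <= i < c.+1) 'C(m, i).
Proof.
elim: m c => [|m IH] c /=.
  rewrite big_ltn // bin0 big_nat_cond big1 // => i /andP [/andP [i0 _] _].
  by rewrite bin0n gtn_eqF.
rewrite size_cat IH; case: c => [|c]; first by rewrite !big_nat1 !bin0.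
rewrite size_map IH big_nat_recl // [in RHS]big_nat_recl //.
by rewrite (eq_bigr _ (fun i _ => binS m i)) big_split /= !bin0; lia.
Qed.

Lemma binary_repr m x : x < 2 ^ m ->
  exists js, [/\ size js <= m, all (fun j => j < m) js & x = \sum_(j <- js) 2 ^ j].
Proof.
elim: m x => [|m IH] x.
  by rewrite expn0 ltnS leqn0 => /eqP ->; exists [::]; rewrite big_nil.
rewrite expnS => hx; have [lt|ge] := ltnP x (2 ^ m).
  have [js [h1 /allP h2 ->]] := IH x lt.
  by exists js; split; [lia | apply/allP => j /h2; lia |].
have [js [h1 /allP h2 hs]] := IH (x - 2 ^ m) ltac:(lia).
exists (m :: js); rewrite /= ltnS h1 ltnSn big_cons -hs.
by split; [|apply/allP => j /h2|]; lia.
Qed.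

Lemma sparse_window_realizable (F : fieldType) n k x : 0 < k -> k < n ->
  x \in sparse_sums (n - k - 1) (k - 1) ->
  (2 ^ (n - k - 1) <= 2 ^ (n - k - 1) + x <= 2 ^ (n - k) - 1) /\
  realizable F n (2 ^ (n - k - 1) + x).
Proof.
move=> k0 kn hx; have xlt := sparse_sums_lt hx.
have e2 : 2 ^ (n - k) = 2 * 2 ^ (n - k - 1) by rewrite exp2_subn1 // subn_gt0.
split; first lia.
have [js [size_js js_lt ->]] := sparse_sums_repr hx.
by apply: chain_realizable js_lt _; lia.
Qed.

Lemma realizable_top_window_sparse (F : fieldType) n l : 2 < n ->
  2 ^ (n - 3) <= l < 2 ^ (n - 2) -> realizable F n l ->
  l \in map (addn (2 ^ (n - 3))) (sparse_sums (n - 3) 1).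
Proof.
move=> n3 /andP [l1 l2] [mul [e [mul_bilinear [e_unit [[S hS] _]]]]].
have e2 : 2 ^ (n - 2) = 2 * 2 ^ (n - 3) by rewrite exp2_subn1 ?subn_gt0 // -subnDA.
have [hl|[t ht]] :=
  set_length_near_exp mul_bilinear e_unit (ltnW (ltnW n3)) hS ltac:(lia).
  by apply/mapP; exists 0; rewrite ?sparse_sums0 //; lia.
have [t0|t0] := posnP t; first by move: ht; rewrite t0; lia.
have tlt : t < n - 2 by rewrite -(ltn_exp2l _ _ (isT : 1 < 2)); lia.
apply/mapP; exists (2 ^ t.-1); first by apply: sparse_sums_exp2; lia.
by move: ht; rewrite -(prednK t0) expnS /=; lia.
Qed.

Theorem proposition4p5 (F : fieldType) (n k : nat) (hk1 : (1 < k)%N) (hkn : (k < n)%N) :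
  (* (1) *)
  (exists s : seq nat,
      uniq s /\
      (forall l, l \in s -> (2 ^ (n - k - 1) <= l <= 2 ^ (n - k) - 1)%N /\ realizable F n l) /\
      (\sum_(0 <= i < (minn (k - 1) (n - k - 1)).+1) 'C(n - k - 1, i) <= size s)%N)
  /\
  (* (2) *)
  ((uphalf n < k)%N ->
     forall l, (2 ^ (n - k - 1) <= l <= 2 ^ (n - k) - 1)%N -> realizable F n l)
  /\
  (* (3) *)
  (k = 2%N ->
     exists s : seq nat,
       uniq s /\ size s = (1 + 'C(n - 3, 1))%N /\
       (forall l, l \in s <->
          ((2 ^ (n - k - 1) <= l <= 2 ^ (n - k) - 1)%N /\ realizable F n l))).
Proof.
have k0 : 0 < k by lia.
have e2 : 2 ^ (n - k) = 2 * 2 ^ (n - k - 1) by rewrite exp2_subn1 // subn_gt0.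
pose window := map (addn (2 ^ (n - k - 1))) (sparse_sums (n - k - 1) (k - 1)).
have window_uniq : uniq window by rewrite map_inj_uniq ?sparse_sums_uniq //; apply: addnI.
have window_ok l : l \in window ->
    (2 ^ (n - k - 1) <= l <= 2 ^ (n - k) - 1) /\ realizable F n l.
  by case/mapP => x hx ->; apply: sparse_window_realizable.
split; [|split].
- exists window; do 2!split => //; rewrite size_map size_sparse_sums.
  have le_min : (minn (k - 1) (n - k - 1)).+1 <= (k - 1).+1 by lia.
  by rewrite (big_cat_nat (leq0n _) le_min) leq_addr.
- rewrite ltn_uphalf_double => hk l /andP [l1 l2].
  have l_lt : l - 2 ^ (n - k - 1) < 2 ^ (n - k - 1) by lia.
  have [js [size_js js_lt hjs]] := binary_repr l_lt.
  have -> : l = 2 ^ (n - k - 1) + \sum_(j <- js) 2 ^ j by lia.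
  by apply: chain_realizable js_lt _; lia.
move=> k2; subst k; have n3 : n - 2 - 1 = n - 3 by lia.
exists window; split=> //; split.
  by rewrite size_map size_sparse_sums big_ltn // big_nat1 bin0 n3.
move=> l; split; first exact: window_ok.
case=> /andP [l1 l2] hl; rewrite /window n3.
apply: realizable_top_window_sparse hl; first lia.
by have := exp2_gt0 (n - 2); rewrite -n3 l1; lia.
Qed.
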